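(* Let $a\in\mathbb{R}$, $b\in(a,\infty)$, $h\in\mathbb{N}$, $v_1,\dots,v_h,w_1,\dots,w_h\in(0,\infty)$, let $f,p\in C(\mathbb{R},\mathbb{R})$ satisfy for all $x\in\mathbb{R}$ that $p(x)\ge0$ and $p^{-1}((0,\infty))=(a,b)$, with $\mathcal{L}$ and $I_k^\theta$ as in the context. Let $\Theta\in C([0,\infty),\mathbb{R}^{h+1})$ satisfy for all $t\in[0,\infty)$ that $\Theta_t=\Theta_0-\int_0^t(\nabla\mathcal{L})(\Theta_s)\,\mathrm{d}s$, and let $k\in\{1,\dots,h\}$ satisfy $I_k^{\Theta_0}\neq\emptyset$. Then for all $t\in[0,\infty)$ it holds that $I_k^{\Theta_t}\neq\emptyset$.
   Context: Let $\mathfrak{c}(x)=\min\{\max\{x,0\},1\}$. For $\theta=(\theta_1,\dots,\theta_{h+1})\in\mathbb{R}^{h+1}$ and $i\in\{1,\dots,h\}$ let $\psi_i(\theta)=-[w_i]^{-1}\theta_i$, $I_i^\theta=(\psi_i(\theta),\psi_i(\theta)+[w_i]^{-1})\cap(a,b)$, $\mathcal{N}^\theta(x)=\theta_{h+1}+\sum_{i=1}^hv_i\mathfrak{c}(w_ix+\theta_i)$, and $\mathcal{L}(\theta)=\int_a^b(\mathcal{N}^\theta(x)-f(x))^2p(x)\,\mathrm{d}x$ ($\mathcal{L}$ is continuously differentiable). *)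

From Stdlib Require Import Reals List.
From Coquelicot Require Import Coquelicot.
Open Scope R_scope.

(* Parameter vectors theta in R^{h+1} are represented as functions nat -> R,
   using the 1-based components theta 1, ..., theta (h+1); other indices are
   irrelevant (nothing below depends on them). *)

Definition clip (x : R) : R := Rmin (Rmax x 0) 1.

Definition Nnet (h : nat) (v w : nat -> R) (theta : nat -> R) (x : R) : R :=
  theta (S h) + fold_right Rplus 0
    (map (fun i => v i * clip (w i * x + theta i)) (seq 1 h)).

Definition Loss (a b : R) (h : nat) (v w : nat -> R) (f p : R -> R)
  (theta : nat -> R) : R :=
  RInt (fun x => (Nnet h v w theta x - f x) ^ 2 * p x) a b.

Definition upd (theta : nat -> R) (i : nat) (s : R) : nat -> R :=
  fun j => if Nat.eqb j i then theta j + s else theta j.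

(* i-th component of the gradient of L (partial derivative; L is C^1) *)
Definition gradL (a b : R) (h : nat) (v w : nat -> R) (f p : R -> R)
  (theta : nat -> R) (i : nat) : R :=
  Derive (fun s => Loss a b h v w f p (upd theta i s)) 0.

Definition psi (w : nat -> R) (theta : nat -> R) (i : nat) : R :=
  - (/ w i) * theta i.

Definition Iset (a b : R) (w : nat -> R) (theta : nat -> R) (i : nat) (x : R) : Prop :=
  psi w theta i < x < psi w theta i + / w i /\ a < x < b.

(* [I_k^theta] is nonempty exactly when [lo < theta_k < hi], with [lo = - w_k b] and
   [hi = 1 - w_k a].  Moving [theta_k] by [s] changes [clip (w_k x + theta_k)] by [s] inside
   [I_k^theta], not at all away from it, and by at most [|s|] on two layers of width
   [|s| / w_k]; hence [dL/dtheta_k = 2 v_k \int_{I_k^theta} (N^theta - f) p], an integral over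
   an interval of length at most [dist(theta_k, {lo, hi}) / w_k] (and zero outside
   [(lo, hi)]).  As the output bias stays bounded on [[0, t]], the coordinate [u = Theta_s k]
   obeys [|u'| <= K dist(u, {lo, hi})], so [P = (u - lo) (hi - u)] satisfies [|P'| <= 2 K |P|]
   and Gronwall keeps [P] positive. *)

From Stdlib Require Import Reals List Lra Lia.
From Coquelicot Require Import Coquelicot.
Open Scope R_scope.

Ltac clip_cases := unfold clip, Rmin, Rmax; repeat destruct Rle_dec; lra.

Lemma clip_nonpos x : x <= 0 -> clip x = 0.
Proof. intros; clip_cases. Qed.

Lemma clip_ge1 x : 1 <= x -> clip x = 1.
Proof. intros; clip_cases. Qed.

Lemma clip_id x : 0 <= x <= 1 -> clip x = x.
Proof. intros; clip_cases. Qed.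

Lemma clip_bounds x : 0 <= clip x <= 1.
Proof. clip_cases. Qed.

Lemma clip_lipschitz x y : Rabs (clip x - clip y) <= Rabs (x - y).
Proof.
  unfold clip, Rmin, Rmax; repeat destruct Rle_dec;
    unfold Rabs; repeat destruct Rcase_abs; lra.
Qed.

Lemma continuity_pt_clip_comp F x :
  continuity_pt F x -> continuity_pt (fun y => clip (F y)) x.
Proof.
  intros HF; apply (continuity_pt_comp F clip); [exact HF|].
  intros eps Heps; exists eps; split; [exact Heps|].
  intros y [_ Hy]; eapply Rle_lt_trans; [apply clip_lipschitz | exact Hy].
Qed.

Lemma continuity_pt_Rabs_comp F x :
  continuity_pt F x -> continuity_pt (fun y => Rabs (F y)) x.
Proof. intros HF; apply (continuity_pt_comp F Rabs); [exact HF | apply Rcontinuity_abs]. Qed.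

Definition clip_shift (u s : R) : R := clip (u + s) - clip u.

Lemma clip_shift_abs u s : Rabs (clip_shift u s) <= Rabs s.
Proof.
  unfold clip_shift; eapply Rle_trans; [apply clip_lipschitz|].
  right; f_equal; ring.
Qed.

Lemma clip_shift_0 u : clip_shift u 0 = 0.
Proof. unfold clip_shift; rewrite Rplus_0_r; ring. Qed.

Lemma clip_shift_below u s : u <= - Rabs s -> clip_shift u s = 0.
Proof.
  intros H; unfold clip_shift; pose proof (Rle_abs s); pose proof (Rabs_pos s).
  rewrite !clip_nonpos by lra; ring.
Qed.

Lemma clip_shift_above u s : 1 + Rabs s <= u -> clip_shift u s = 0.
Proof.
  intros H; unfold clip_shift; pose proof (Rle_abs (- s)); pose proof (Rabs_pos s).
  rewrite Rabs_Ropp in *; rewrite !clip_ge1 by lra; ring.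
Qed.

Lemma clip_shift_inside u s : Rabs s <= u <= 1 - Rabs s -> clip_shift u s = s.
Proof.
  intros H; unfold clip_shift; pose proof (Rle_abs s); pose proof (Rle_abs (- s)).
  rewrite Rabs_Ropp in *; rewrite !clip_id by lra; ring.
Qed.

Definition sumL (l : list nat) (F : nat -> R) : R := fold_right Rplus 0 (map F l).

Lemma sumL_abs_le l F G :
  (forall i, In i l -> Rabs (F i) <= G i) -> Rabs (sumL l F) <= sumL l G.
Proof.
  unfold sumL; induction l as [|i l IH]; intros H; simpl.
  - rewrite Rabs_R0; lra.
  - eapply Rle_trans; [apply Rabs_triang|].
    apply Rplus_le_compat; [apply H; left; reflexivity|].
    apply IH; intros j Hj; apply H; right; exact Hj.
Qed.

Lemma sumL_minus l F G : sumL l F - sumL l G = sumL l (fun i => F i - G i).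
Proof. unfold sumL; induction l as [|i l IH]; simpl; lra. Qed.

Lemma sumL_zero l F : (forall i, In i l -> F i = 0) -> sumL l F = 0.
Proof.
  unfold sumL; induction l as [|i l IH]; intros H; simpl; [reflexivity|].
  rewrite H, IH; [ring | intros j Hj; apply H; right; exact Hj | left; reflexivity].
Qed.

Lemma sumL_update l F G k : NoDup l -> In k l -> (forall i, i <> k -> G i = F i) ->
  sumL l G = sumL l F + (G k - F k).
Proof.
  intros Hnd Hk HG; induction Hnd as [|i l Hi Hnd IH]; [destruct Hk|].
  change (sumL (i :: l) G) with (G i + sumL l G).
  change (sumL (i :: l) F) with (F i + sumL l F).
  destruct Hk as [<-|Hk].
  - assert (sumL l G - sumL l F = 0).
    { rewrite sumL_minus; apply sumL_zero.
      intros j Hj; rewrite HG; [ring | intros ->; contradiction]. }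
    lra.
  - rewrite HG by (intros ->; contradiction). rewrite IH by exact Hk. ring.
Qed.

Lemma continuity_pt_sumL l (F : nat -> R -> R) x :
  (forall i, In i l -> continuity_pt (F i) x) ->
  continuity_pt (fun y => sumL l (fun i => F i y)) x.
Proof.
  unfold sumL; induction l as [|i l IH]; intros H; simpl.
  - apply continuity_pt_const; intros ? ?; reflexivity.
  - apply continuity_pt_plus; [apply H; left; reflexivity|].
    apply IH; intros j Hj; apply H; right; exact Hj.
Qed.

Lemma upd_same th k s : upd th k s k = th k + s.
Proof. unfold upd; rewrite Nat.eqb_refl; reflexivity. Qed.

Lemma upd_other th k s i : i <> k -> upd th k s i = th i.
Proof. intros H; unfold upd; apply Nat.eqb_neq in H; rewrite H; reflexivity. Qed.

Lemma Nnet_upd h v w th k s x : (1 <= k <= h)%nat ->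
  Nnet h v w (upd th k s) x = Nnet h v w th x + v k * clip_shift (w k * x + th k) s.
Proof.
  intros Hk; unfold Nnet; fold (sumL (seq 1 h) (fun i => v i * clip (w i * x + upd th k s i))).
  fold (sumL (seq 1 h) (fun i => v i * clip (w i * x + th i))).
  rewrite upd_other by lia.
  rewrite (sumL_update _ (fun i => v i * clip (w i * x + th i)) _ k).
  - rewrite upd_same; unfold clip_shift.
    replace (w k * x + (th k + s)) with (w k * x + th k + s) by ring; ring.
  - apply seq_NoDup.
  - apply in_seq; lia.
  - intros i Hi; rewrite upd_other by exact Hi; reflexivity.
Qed.

Definition vnorm (h : nat) (v : nat -> R) : R := sumL (seq 1 h) (fun i => Rabs (v i)).

Lemma Nnet_abs_le h v w th x : Rabs (Nnet h v w th x) <= Rabs (th (S h)) + vnorm h v.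
Proof.
  unfold Nnet; eapply Rle_trans; [apply Rabs_triang|]; apply Rplus_le_compat_l.
  apply sumL_abs_le; intros i _.
  rewrite Rabs_mult; pose proof (clip_bounds (w i * x + th i)); pose proof (Rabs_pos (v i)).
  rewrite (Rabs_pos_eq (clip _)) by lra; nra.
Qed.

Definition param_dist (h : nat) (v : nat -> R) (th th0 : nat -> R) : R :=
  Rabs (th (S h) - th0 (S h)) + sumL (seq 1 h) (fun i => Rabs (v i) * Rabs (th i - th0 i)).

Lemma Nnet_sub_abs_le h v w th th0 x :
  Rabs (Nnet h v w th x - Nnet h v w th0 x) <= param_dist h v th th0.
Proof.
  unfold Nnet, param_dist; fold (sumL (seq 1 h) (fun i => v i * clip (w i * x + th i))).
  fold (sumL (seq 1 h) (fun i => v i * clip (w i * x + th0 i))).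
  eapply Rle_trans; [|apply Rplus_le_compat_l, sumL_abs_le].
  - replace (_ - _) with ((th (S h) - th0 (S h)) +
      (sumL (seq 1 h) (fun i => v i * clip (w i * x + th i)) -
       sumL (seq 1 h) (fun i => v i * clip (w i * x + th0 i)))) by ring.
    rewrite sumL_minus; apply Rabs_triang.
  - intros i _; cbv beta; rewrite <- Rmult_minus_distr_l, Rabs_mult.
    apply Rmult_le_compat_l; [apply Rabs_pos|].
    eapply Rle_trans; [apply clip_lipschitz|]; right; f_equal; ring.
Qed.

Ltac continuity_pt_tac :=
  repeat first
    [ match goal with H : continuity_pt _ _ |- continuity_pt _ _ => apply H end
    | match goal with H : continuity _ |- continuity_pt _ _ => apply H end
    | apply continuity_pt_plus | apply continuity_pt_minus | apply continuity_pt_mult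
    | apply continuity_pt_opp | apply continuity_pt_id | apply continuity_pt_clip_comp
    | apply continuity_pt_Rabs_comp
    | (apply continuity_pt_const; intros ? ?; reflexivity) | progress cbn [pow] ].

Lemma continuity_Nnet h v w th : continuity (Nnet h v w th).
Proof.
  intros x; unfold Nnet; fold (sumL (seq 1 h) (fun i => v i * clip (w i * x + th i))).
  apply continuity_pt_plus; [continuity_pt_tac|].
  apply (continuity_pt_sumL _ (fun i y => v i * clip (w i * y + th i))).
  intros i _; continuity_pt_tac.
Qed.

Lemma ex_RInt_continuity F c d : continuity F -> ex_RInt F c d.
Proof.
  intros HF; apply (@ex_RInt_continuous R_CompleteNormedModule).
  intros z _; apply continuity_pt_filterlim, HF.
Qed.

Lemma RInt_Chasles_continuity F x y z : continuity F ->
  RInt F x y + RInt F y z = RInt F x z.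
Proof. intros HF; apply (RInt_Chasles F x y z); apply ex_RInt_continuity, HF. Qed.

Lemma RInt_minus_continuity F G c d : continuity F -> continuity G ->
  RInt (fun x => F x - G x) c d = RInt F c d - RInt G c d.
Proof. intros HF HG; apply (RInt_minus F G); apply ex_RInt_continuity; assumption. Qed.

Lemma RInt_plus_continuity F G c d : continuity F -> continuity G ->
  RInt (fun x => F x + G x) c d = RInt F c d + RInt G c d.
Proof. intros HF HG; apply (RInt_plus F G); apply ex_RInt_continuity; assumption. Qed.

Lemma RInt_abs_le_const F c d M : continuity F ->
  (forall x, Rmin c d <= x <= Rmax c d -> Rabs (F x) <= M) ->
  Rabs (RInt F c d) <= M * Rabs (d - c).
Proof.
  intros HF HM; destruct (Rle_dec c d) as [Hcd|Hcd].
  - rewrite Rmin_left, Rmax_right in HM by lra.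
    rewrite (Rabs_pos_eq (d - c)), Rmult_comm by lra.
    apply abs_RInt_le_const; [exact Hcd | apply ex_RInt_continuity, HF | exact HM].
  - rewrite Rmin_right, Rmax_left in HM by lra.
    rewrite <- opp_RInt_swap by (apply ex_RInt_continuity, HF).
    change (Rabs (- RInt F d c) <= M * Rabs (d - c)).
    rewrite Rabs_Ropp, Rabs_minus_sym, (Rabs_pos_eq (c - d)), Rmult_comm by lra.
    apply abs_RInt_le_const; [lra | apply ex_RInt_continuity, HF | exact HM].
Qed.

Lemma abs_le_on_nonneg (F : R -> R) c d M : c <= d ->
  (forall x, c <= x <= d -> Rabs (F x) <= M) -> 0 <= M.
Proof.
  intros Hcd HM; pose proof (HM c (conj (Rle_refl c) Hcd)); pose proof (Rabs_pos (F c)); lra.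
Qed.

Lemma RInt_abs_le_vanishing F c d M l r : c <= d -> 0 <= l -> 0 <= r -> continuity F ->
  (forall x, c <= x <= d -> Rabs (F x) <= M) ->
  (forall x, c + l <= x <= d - r -> F x = 0) ->
  Rabs (RInt F c d) <= M * (l + r).
Proof.
  intros Hcd Hl Hr HF HM Hzero.
  pose proof (abs_le_on_nonneg F c d M Hcd HM) as HM0.
  set (p1 := Rmin d (c + l)); set (p2 := Rmax p1 (d - r)).
  assert (Hp : c <= p1 <= p2 /\ p2 <= d /\ p1 - c <= l /\ d - p2 <= r)
    by (unfold p2, p1, Rmax, Rmin; repeat destruct Rle_dec; lra).
  assert (Hpiece : forall y z, c <= y <= z -> z <= d -> Rabs (RInt F y z) <= M * (z - y)).
  { intros y z Hy Hz; rewrite <- (Rabs_pos_eq (z - y)) by lra.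
    apply RInt_abs_le_const; [exact HF|]; intros x Hx; apply HM.
    rewrite Rmin_left, Rmax_right in Hx; lra. }
  assert (Hmid : RInt F p1 p2 = 0).
  { rewrite (RInt_ext F (fun _ => 0)), RInt_const; [apply Rmult_0_r|].
    intros x Hx; rewrite Rmin_left, Rmax_right in Hx by lra.
    apply Hzero; unfold p2, p1, Rmax, Rmin in *; repeat destruct Rle_dec; lra. }
  rewrite <- (RInt_Chasles_continuity F c p1 d), <- (RInt_Chasles_continuity F p1 p2 d), Hmid,
    Rplus_0_l by exact HF.
  pose proof (Hpiece c p1 ltac:(lra) ltac:(lra)); pose proof (Hpiece p2 d ltac:(lra) ltac:(lra)).
  eapply Rle_trans; [apply Rabs_triang | nra].
Qed.

Definition clamp (c d x : R) : R := Rmax c (Rmin d x).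

Ltac clamp_cases := unfold clamp, Rmax, Rmin in *; repeat destruct Rle_dec; try lra.

Lemma clamp_bounds c d x : c <= d -> c <= clamp c d x <= d.
Proof. intros; clamp_cases. Qed.

Lemma clamp_le_compat c d x y : x <= y -> clamp c d x <= clamp c d y.
Proof. intros; clamp_cases. Qed.

Lemma clamp_lipschitz c d x y : Rabs (clamp c d x - clamp c d y) <= Rabs (x - y).
Proof. clamp_cases; unfold Rabs; repeat destruct Rcase_abs; lra. Qed.

Lemma affine_clamp W t c d x : 0 < W ->
  W * clamp c d x + t = clamp (W * c + t) (W * d + t) (W * x + t).
Proof.
  intros HW; unfold clamp, Rmax, Rmin; repeat destruct Rle_dec; try reflexivity;
    exfalso; nra.
Qed.

(* When a kink is clamped to an endpoint, these hypotheses can only hold for [s = 0]. *)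
Lemma clip_shift_below_clamp A B u s : A <= u -> u <= clamp A B 0 - Rabs s ->
  clip_shift u s = 0.
Proof.
  intros HA Hu; destruct (Req_dec s 0) as [->|Hs]; [apply clip_shift_0|].
  pose proof (Rabs_pos_lt s Hs); apply clip_shift_below; clamp_cases.
Qed.

Lemma clip_shift_above_clamp A B u s : u <= B -> clamp A B 1 + Rabs s <= u ->
  clip_shift u s = 0.
Proof.
  intros HB Hu; destruct (Req_dec s 0) as [->|Hs]; [apply clip_shift_0|].
  pose proof (Rabs_pos_lt s Hs); apply clip_shift_above; clamp_cases.
Qed.

Lemma clip_shift_between_clamp A B u s :
  clamp A B 0 + Rabs s <= u <= clamp A B 1 - Rabs s -> clip_shift u s = s.
Proof.
  intros Hu; destruct (Req_dec s 0) as [->|Hs]; [apply clip_shift_0|].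
  pose proof (Rabs_pos_lt s Hs); apply clip_shift_inside; clamp_cases.
Qed.

Section ClipShiftIntegral.

Variables (c d W t M : R) (g : R -> R).
Hypotheses (Hcd : c <= d) (HW : 0 < W) (Hg : continuity g)
  (HgM : forall x, c <= x <= d -> Rabs (g x) <= M).

(* [al] and [be] are the points of [[c, d]] where [W x + t] meets the kinks [0] and [1]. *)
Let al := clamp c d (- t / W).
Let be := clamp c d ((1 - t) / W).
Let A := W * c + t.
Let B := W * d + t.

Lemma affine_clamp_kink0 : W * al + t = clamp A B 0.
Proof. unfold al; rewrite affine_clamp by exact HW; f_equal; field; lra. Qed.

Lemma affine_clamp_kink1 : W * be + t = clamp A B 1.
Proof. unfold be; rewrite affine_clamp by exact HW; f_equal; field; lra. Qed.

Lemma clamp_kinks_ordered : c <= al <= be /\ be <= d.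
Proof.
  pose proof (clamp_bounds c d (- t / W) Hcd); pose proof (clamp_bounds c d ((1 - t) / W) Hcd).
  assert (Hkinks : - t / W <= (1 - t) / W)
    by (unfold Rdiv; apply Rmult_le_compat_r; [apply Rlt_le, Rinv_0_lt_compat, HW | lra]).
  pose proof (clamp_le_compat c d _ _ Hkinks); unfold al, be; lra.
Qed.

Lemma affine_le x y : x <= y -> W * x + t <= W * y + t.
Proof. intros; nra. Qed.

Lemma mul_layer s : W * (Rabs s / W) = Rabs s.
Proof. field; lra. Qed.

Lemma abs_mul_layer s : Rabs s * M * (Rabs s / W) = M / W * (s * s).
Proof.
  assert (Habs : Rabs s * Rabs s = s * s) by (rewrite <- Rabs_mult; apply Rabs_pos_eq; nra).
  rewrite <- Habs; field; lra.
Qed.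

Lemma continuity_clip_shift_affine s : continuity (fun x => clip_shift (W * x + t) s).
Proof. intros x; unfold clip_shift; continuity_pt_tac. Qed.

Lemma clip_shift_affine_mul_abs_le s x : c <= x <= d ->
  Rabs (clip_shift (W * x + t) s * g x) <= Rabs s * M.
Proof.
  intros Hx; rewrite Rabs_mult.
  apply Rmult_le_compat; [apply Rabs_pos | apply Rabs_pos | apply clip_shift_abs | apply HgM, Hx].
Qed.

Lemma RInt_clip_shift_left s :
  Rabs (RInt (fun x => clip_shift (W * x + t) s * g x) c al) <= M / W * (s * s).
Proof.
  pose proof clamp_kinks_ordered; pose proof (mul_layer s).
  assert (0 <= Rabs s / W) by (apply Rdiv_le_0_compat; [apply Rabs_pos | exact HW]).
  rewrite <- abs_mul_layer, <- (Rplus_0_l (Rabs s / W)).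
  apply RInt_abs_le_vanishing; try lra.
  - intros x; apply continuity_pt_mult; [apply continuity_clip_shift_affine | apply Hg].
  - intros x Hx; apply clip_shift_affine_mul_abs_le; lra.
  - intros x Hx; rewrite (clip_shift_below_clamp A B); [ring | unfold A; apply affine_le; lra |].
    rewrite <- affine_clamp_kink0; pose proof (affine_le x (al - Rabs s / W) (proj2 Hx)); lra.
Qed.

Lemma RInt_clip_shift_right s :
  Rabs (RInt (fun x => clip_shift (W * x + t) s * g x) be d) <= M / W * (s * s).
Proof.
  pose proof clamp_kinks_ordered; pose proof (mul_layer s).
  assert (0 <= Rabs s / W) by (apply Rdiv_le_0_compat; [apply Rabs_pos | exact HW]).
  rewrite <- abs_mul_layer, <- (Rplus_0_r (Rabs s / W)).
  apply RInt_abs_le_vanishing; try lra.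
  - intros x; apply continuity_pt_mult; [apply continuity_clip_shift_affine | apply Hg].
  - intros x Hx; apply clip_shift_affine_mul_abs_le; lra.
  - intros x Hx; rewrite (clip_shift_above_clamp A B); [ring | unfold B; apply affine_le; lra |].
    rewrite <- affine_clamp_kink1; pose proof (affine_le (be + Rabs s / W) x (proj1 Hx)); lra.
Qed.

Lemma RInt_clip_shift_middle s :
  Rabs (RInt (fun x => (clip_shift (W * x + t) s - s) * g x) al be) <= 4 * (M / W * (s * s)).
Proof.
  pose proof clamp_kinks_ordered; pose proof (mul_layer s).
  assert (0 <= Rabs s / W) by (apply Rdiv_le_0_compat; [apply Rabs_pos | exact HW]).
  rewrite <- abs_mul_layer; replace (4 * (Rabs s * M * (Rabs s / W)))
    with (2 * Rabs s * M * (Rabs s / W + Rabs s / W)) by ring.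
  apply RInt_abs_le_vanishing; try lra.
  - intros x; apply continuity_pt_mult; [|apply Hg].
    apply continuity_pt_minus; [apply continuity_clip_shift_affine | continuity_pt_tac].
  - intros x Hx; rewrite Rabs_mult; apply Rmult_le_compat; try apply Rabs_pos; [|apply HgM; lra].
    eapply Rle_trans; [apply Rabs_triang|].
    rewrite Rabs_Ropp; pose proof (clip_shift_abs (W * x + t) s); lra.
  - intros x Hx; rewrite (clip_shift_between_clamp A B); [ring|].
    rewrite <- affine_clamp_kink0, <- affine_clamp_kink1.
    pose proof (affine_le (al + Rabs s / W) x (proj1 Hx));
      pose proof (affine_le x (be - Rabs s / W) (proj2 Hx)); lra.
Qed.

Lemma RInt_clip_shift s :
  Rabs (RInt (fun x => clip_shift (W * x + t) s * g x) c d
        - s * RInt g (clamp c d (- t / W)) (clamp c d ((1 - t) / W)))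
  <= 6 * M / W * (s * s).
Proof.
  fold al be; pose proof clamp_kinks_ordered.
  assert (HF : continuity (fun x => clip_shift (W * x + t) s * g x))
    by (intros x; apply continuity_pt_mult; [apply continuity_clip_shift_affine | apply Hg]).
  assert (Hscal : RInt (fun x => s * g x) al be = s * RInt g al be)
    by (apply (RInt_scal g al be s), ex_RInt_continuity, Hg).
  rewrite <- (RInt_Chasles_continuity _ c al d), <- (RInt_Chasles_continuity _ al be d),
    <- Hscal by exact HF.
  assert (Hmid : RInt (fun x => clip_shift (W * x + t) s * g x) al be
                 - RInt (fun x => s * g x) al be
                 = RInt (fun x => (clip_shift (W * x + t) s - s) * g x) al be).
  { rewrite <- RInt_minus_continuity; [| exact HF | intros x; continuity_pt_tac].
    apply RInt_ext; intros x _; simpl; ring. }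
  pose proof (RInt_clip_shift_left s); pose proof (RInt_clip_shift_right s).
  pose proof (RInt_clip_shift_middle s).
  set (F := fun x => clip_shift (W * x + t) s * g x) in *.
  replace (RInt F c al + (RInt F al be + RInt F be d) - RInt (fun x => s * g x) al be)
    with (RInt F c al + (RInt F al be - RInt (fun x => s * g x) al be) + RInt F be d) by ring.
  rewrite Hmid; eapply Rle_trans; [apply Rabs_triang|].
  eapply Rle_trans; [apply Rplus_le_compat_r, Rabs_triang|].
  unfold Rdiv in *; lra.
Qed.

End ClipShiftIntegral.

Lemma continuity_bounded F c d : c <= d -> continuity F ->
  exists M, forall x, c <= x <= d -> Rabs (F x) <= M.
Proof.
  intros Hcd HF; destruct (continuity_ab_maj (fun x => Rabs (F x)) c d Hcd) as [m [Hm _]].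
  - intros y _; apply continuity_pt_Rabs_comp, HF.
  - exists (Rabs (F m)); exact Hm.
Qed.

Lemma is_derive_quadratic_remainder (phi : R -> R) y D C :
  (forall s, Rabs (phi s - y - s * D) <= C * (s * s)) -> is_derive phi 0 D.
Proof.
  intros Hphi; apply is_derive_Reals.
  assert (Hy : phi 0 = y).
  { pose proof (Hphi 0) as H0; rewrite !Rmult_0_l, Rmult_0_r, Rminus_0_r in H0.
    pose proof (Rabs_pos (phi 0 - y)); apply Rminus_diag_uniq, Rabs_eq_0; lra. }
  pose proof (Rabs_pos C) as HC; pose proof (Rle_abs C).
  intros eps Heps.
  assert (Hdelta : 0 < eps / (Rabs C + 1)) by (apply Rdiv_lt_0_compat; lra).
  exists (mkposreal _ Hdelta); intros s Hs0 Hs; simpl in Hs.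
  assert (Hpos : 0 < Rabs s) by (apply Rabs_pos_lt, Hs0).
  assert (Hsmall : Rabs s * (Rabs C + 1) < eps).
  { apply (Rmult_lt_compat_r (Rabs C + 1)) in Hs; [|lra].
    unfold Rdiv in Hs; rewrite Rmult_assoc, Rinv_l, Rmult_1_r in Hs by lra; exact Hs. }
  rewrite Rplus_0_l, Hy.
  replace ((phi s - y) / s - D) with ((phi s - y - s * D) / s) by (field; exact Hs0).
  unfold Rdiv; rewrite Rabs_mult, Rabs_inv.
  apply (Rmult_lt_reg_r (Rabs s)); [exact Hpos|].
  rewrite Rmult_assoc, Rinv_l, Rmult_1_r by lra.
  pose proof (Hphi s) as Hrem.
  rewrite <- (Rabs_pos_eq (s * s)), Rabs_mult in Hrem by nra.
  nra.
Qed.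

Definition grad_density (h : nat) (v w : nat -> R) (f p : R -> R) (th : nat -> R) (k : nat)
  (x : R) : R := 2 * v k * (Nnet h v w th x - f x) * p x.

(* The partial derivative of the risk in [theta_k]: [clip (w_k x + theta_k)] has slope
   one exactly on the closure of [I_k^theta], whose ends are the two clamped bounds. *)
Definition gradL_explicit (a b : R) (h : nat) (v w : nat -> R) (f p : R -> R)
  (th : nat -> R) (k : nat) : R :=
  RInt (grad_density h v w f p th k) (clamp a b (- th k / w k)) (clamp a b ((1 - th k) / w k)).

Lemma continuity_grad_density h v w f p th k : continuity f -> continuity p ->
  continuity (grad_density h v w f p th k).
Proof.
  intros Hf Hp x; unfold grad_density; pose proof (continuity_Nnet h v w th); continuity_pt_tac.
Qed.

Lemma Loss_upd_sub a b h v w f p th k s : (1 <= k <= h)%nat -> continuity f -> continuity p ->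
  Loss a b h v w f p (upd th k s) - Loss a b h v w f p th =
  RInt (fun x => clip_shift (w k * x + th k) s * grad_density h v w f p th k x) a b
  + RInt (fun x => (v k * clip_shift (w k * x + th k) s) ^ 2 * p x) a b.
Proof.
  intros Hk Hf Hp; pose proof (continuity_Nnet h v w th).
  pose proof (continuity_Nnet h v w (upd th k s)).
  unfold Loss; rewrite <- RInt_minus_continuity, <- RInt_plus_continuity
    by (intros x; unfold grad_density, clip_shift; continuity_pt_tac).
  apply RInt_ext; intros x _; simpl; rewrite Nnet_upd by exact Hk; unfold grad_density; ring.
Qed.

Lemma Loss_upd_expansion a b h v w f p th k M Mp s :
  a <= b -> 0 < w k -> (1 <= k <= h)%nat -> continuity f -> continuity p ->
  (forall x, a <= x <= b -> Rabs (grad_density h v w f p th k x) <= M) ->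
  (forall x, a <= x <= b -> Rabs (p x) <= Mp) ->
  Rabs (Loss a b h v w f p (upd th k s) - Loss a b h v w f p th
        - s * gradL_explicit a b h v w f p th k)
  <= (6 * M / w k + v k ^ 2 * Mp * (b - a)) * (s * s).
Proof.
  intros Hab Hw Hk Hf Hp HM HMp.
  rewrite Loss_upd_sub by assumption; unfold gradL_explicit.
  pose proof (RInt_clip_shift a b (w k) (th k) M _ Hab Hw
                (continuity_grad_density h v w f p th k Hf Hp) HM s) as Hlin.
  assert (Hquad : Rabs (RInt (fun x => (v k * clip_shift (w k * x + th k) s) ^ 2 * p x) a b)
                  <= v k ^ 2 * (s * s) * Mp * Rabs (b - a)).
  { apply RInt_abs_le_const; [intros x; unfold clip_shift; continuity_pt_tac |].
    intros x Hx; rewrite Rmin_left, Rmax_right in Hx by exact Hab.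
    set (D := clip_shift (w k * x + th k) s).
    assert (HD : Rsqr D <= Rsqr s) by apply Rsqr_le_abs_1, clip_shift_abs.
    unfold Rsqr in HD; pose proof (HMp x Hx); pose proof (Rabs_pos (p x)).
    rewrite Rabs_mult, (Rabs_pos_eq (_ ^ 2)) by apply pow2_ge_0.
    replace ((v k * D) ^ 2) with (v k ^ 2 * (D * D)) by ring.
    pose proof (pow2_ge_0 (v k)); pose proof (Rle_0_sqr D); unfold Rsqr in *.
    apply Rmult_le_compat; [apply Rmult_le_pos; assumption | lra | | lra].
    apply Rmult_le_compat_l; lra. }
  rewrite (Rabs_pos_eq (b - a)) in Hquad by lra.
  match goal with |- Rabs (?I1 + ?I2 - ?L) <= _ =>
    replace (I1 + I2 - L) with ((I1 - L) + I2) by ring end.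
  eapply Rle_trans; [apply Rabs_triang|].
  replace ((6 * M / w k + v k ^ 2 * Mp * (b - a)) * (s * s))
    with (6 * M / w k * (s * s) + v k ^ 2 * (s * s) * Mp * (b - a)) by ring.
  lra.
Qed.

Lemma gradL_eq_explicit a b h v w f p th k :
  a <= b -> 0 < w k -> (1 <= k <= h)%nat -> continuity f -> continuity p ->
  gradL a b h v w f p th k = gradL_explicit a b h v w f p th k.
Proof.
  intros Hab Hw Hk Hf Hp.
  destruct (continuity_bounded _ a b Hab (continuity_grad_density h v w f p th k Hf Hp)) as [M HM].
  destruct (continuity_bounded p a b Hab Hp) as [Mp HMp].
  apply is_derive_unique, (is_derive_quadratic_remainder _ (Loss a b h v w f p th) _
    (6 * M / w k + v k ^ 2 * Mp * (b - a))).
  intros s; apply Loss_upd_expansion; assumption.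
Qed.

Lemma param_dist_refl h v th : param_dist h v th th = 0.
Proof.
  unfold param_dist; rewrite Rminus_diag, Rabs_R0, sumL_zero; [ring|].
  intros i _; rewrite Rminus_diag, Rabs_R0; ring.
Qed.

Lemma continuity_pt_param_dist h v (Th : R -> nat -> R) th0 s0 :
  (forall i, (1 <= i <= S h)%nat -> continuity_pt (fun s => Th s i) s0) ->
  continuity_pt (fun s => param_dist h v (Th s) th0) s0.
Proof.
  intros HTh; unfold param_dist; pose proof (HTh (S h) ltac:(lia)).
  apply continuity_pt_plus; [continuity_pt_tac|].
  apply (continuity_pt_sumL _ (fun i s => Rabs (v i) * Rabs (Th s i - th0 i))).
  intros i Hi; apply in_seq in Hi; pose proof (HTh i ltac:(lia)); continuity_pt_tac.
Qed.

Lemma grad_density_abs_le h v w f p th k x Mf Mp : Rabs (f x) <= Mf -> Rabs (p x) <= Mp ->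
  Rabs (grad_density h v w f p th k x) <= 2 * Rabs (v k) * (Rabs (th (S h)) + vnorm h v + Mf) * Mp.
Proof.
  intros Hf Hp; unfold grad_density; rewrite !Rabs_mult, (Rabs_pos_eq 2) by lra.
  assert (HN : Rabs (Nnet h v w th x - f x) <= Rabs (th (S h)) + vnorm h v + Mf).
  { unfold Rminus; eapply Rle_trans; [apply Rabs_triang|].
    rewrite Rabs_Ropp; pose proof (Nnet_abs_le h v w th x); lra. }
  pose proof (Rabs_pos (v k)); pose proof (Rabs_pos (p x)).
  pose proof (Rabs_pos (Nnet h v w th x - f x)).
  apply Rmult_le_compat; [nra | lra | | lra].
  apply Rmult_le_compat_l; [lra | exact HN].
Qed.

Lemma grad_density_sub_abs_le h v w f p th th0 k x Mp : Rabs (p x) <= Mp ->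
  Rabs (grad_density h v w f p th k x - grad_density h v w f p th0 k x)
  <= 2 * Rabs (v k) * Mp * param_dist h v th th0.
Proof.
  intros Hp; unfold grad_density.
  replace (_ - _) with (2 * v k * (Nnet h v w th x - Nnet h v w th0 x) * p x) by ring.
  rewrite !Rabs_mult, (Rabs_pos_eq 2) by lra.
  pose proof (Nnet_sub_abs_le h v w th th0 x); pose proof (Rabs_pos (v k)).
  pose proof (Rabs_pos (p x)); pose proof (Rabs_pos (Nnet h v w th x - Nnet h v w th0 x)).
  replace (2 * Rabs (v k) * Mp * param_dist h v th th0)
    with (2 * Rabs (v k) * param_dist h v th th0 * Mp) by ring.
  apply Rmult_le_compat; [nra | lra | | lra].
  apply Rmult_le_compat_l; lra.
Qed.

Definition interior_dist (lo hi u : R) : R := Rmax 0 (Rmin (u - lo) (hi - u)).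

Lemma clamp_one_sub_clamp_zero_le A B : A <= B ->
  clamp A B 1 - clamp A B 0 <= Rmax 0 (Rmin B (1 - A)).
Proof. intros; clamp_cases. Qed.

Lemma gradL_explicit_abs_le a b h v w f p th k M :
  a <= b -> 0 < w k -> continuity f -> continuity p ->
  (forall x, a <= x <= b -> Rabs (grad_density h v w f p th k x) <= M) ->
  Rabs (gradL_explicit a b h v w f p th k)
  <= M / w k * interior_dist (- w k * b) (1 - w k * a) (th k).
Proof.
  intros Hab Hw Hf Hp HM; unfold gradL_explicit.
  pose proof (clamp_kinks_ordered a b (w k) (th k) Hab Hw).
  set (al := clamp a b (- th k / w k)) in *; set (be := clamp a b ((1 - th k) / w k)) in *.
  assert (Hlen : w k * (be - al) <= interior_dist (- w k * b) (1 - w k * a) (th k)).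
  { replace (w k * (be - al)) with ((w k * be + th k) - (w k * al + th k)) by ring.
    unfold al, be; rewrite affine_clamp_kink0, affine_clamp_kink1 by exact Hw.
    unfold interior_dist; replace (th k - - w k * b) with (w k * b + th k) by ring.
    replace (1 - w k * a - th k) with (1 - (w k * a + th k)) by ring.
    apply clamp_one_sub_clamp_zero_le; nra. }
  pose proof (abs_le_on_nonneg _ a b M Hab HM) as HM0.
  eapply Rle_trans; [apply RInt_abs_le_const; [apply continuity_grad_density; assumption|]|].
  - intros x Hx; apply HM; rewrite Rmin_left, Rmax_right in Hx; lra.
  - rewrite Rabs_pos_eq by lra; unfold Rdiv; rewrite Rmult_assoc.
    apply Rmult_le_compat_l; [exact HM0|].
    apply (Rmult_le_reg_l (w k)); [exact Hw|].
    replace (w k * (/ w k * interior_dist (- w k * b) (1 - w k * a) (th k)))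
      with (interior_dist (- w k * b) (1 - w k * a) (th k)) by (field; lra).
    exact Hlen.
Qed.

Lemma RInt_sub_abs_le (g g0 : R -> R) a b al be al0 be0 M0 E :
  a <= al <= b -> a <= be <= b -> a <= al0 <= b -> a <= be0 <= b ->
  continuity g -> continuity g0 ->
  (forall x, a <= x <= b -> Rabs (g0 x) <= M0) ->
  (forall x, a <= x <= b -> Rabs (g x - g0 x) <= E) ->
  Rabs (RInt g al be - RInt g0 al0 be0) <= M0 * (Rabs (al - al0) + Rabs (be - be0)) + E * (b - a).
Proof.
  intros Hal Hbe Hal0 Hbe0 Hg Hg0 HM0 HE.
  assert (Hin : forall x y z, a <= y <= b -> a <= z <= b ->
                 Rmin y z <= x <= Rmax y z -> a <= x <= b)
    by (intros x y z Hy Hz Hx; unfold Rmin, Rmax in Hx; repeat destruct Rle_dec; lra).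
  assert (B1 : Rabs (RInt g0 al al0) <= M0 * Rabs (al0 - al))
    by (apply RInt_abs_le_const; [exact Hg0 | intros x Hx; apply HM0, (Hin x al al0); assumption]).
  assert (B2 : Rabs (RInt g0 be0 be) <= M0 * Rabs (be - be0))
    by (apply RInt_abs_le_const; [exact Hg0 | intros x Hx; apply HM0, (Hin x be0 be); assumption]).
  assert (B3 : Rabs (RInt (fun x => g x - g0 x) al be) <= E * Rabs (be - al)).
  { apply RInt_abs_le_const; [intros x; apply continuity_pt_minus; [apply Hg | apply Hg0]|].
    intros x Hx; apply HE, (Hin x al be); assumption. }
  assert (HE0 : 0 <= E) by (apply (abs_le_on_nonneg (fun x => g x - g0 x) a b); [lra | exact HE]).
  assert (Hlen : E * Rabs (be - al) <= E * (b - a))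
    by (apply Rmult_le_compat_l; [exact HE0 | unfold Rabs; destruct Rcase_abs; lra]).
  replace (RInt g al be - RInt g0 al0 be0)
    with (RInt g0 al al0 + RInt g0 be0 be + RInt (fun x => g x - g0 x) al be).
  2:{ rewrite RInt_minus_continuity by assumption.
      rewrite <- (RInt_Chasles_continuity g0 al al0 be), <- (RInt_Chasles_continuity g0 al0 be0 be)
        by assumption.
      ring. }
  rewrite Rabs_minus_sym in B1.
  eapply Rle_trans; [apply Rabs_triang|]; eapply Rle_trans; [apply Rplus_le_compat_r, Rabs_triang|].
  lra.
Qed.

Lemma clamp_affine_sub_abs_le a b W y th th0 : 0 < W ->
  Rabs (clamp a b ((y - th) / W) - clamp a b ((y - th0) / W)) <= Rabs (th - th0) / W.
Proof.
  intros HW; eapply Rle_trans; [apply clamp_lipschitz|]; right.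
  replace ((y - th) / W - (y - th0) / W) with (- ((th - th0) / W)) by (field; lra).
  rewrite Rabs_Ropp; unfold Rdiv; rewrite Rabs_mult, Rabs_inv, (Rabs_pos_eq W) by lra; reflexivity.
Qed.

Lemma gradL_explicit_sub_abs_le a b h v w f p th th0 k M0 E :
  a <= b -> 0 < w k -> continuity f -> continuity p ->
  (forall x, a <= x <= b -> Rabs (grad_density h v w f p th0 k x) <= M0) ->
  (forall x, a <= x <= b ->
     Rabs (grad_density h v w f p th k x - grad_density h v w f p th0 k x) <= E) ->
  Rabs (gradL_explicit a b h v w f p th k - gradL_explicit a b h v w f p th0 k)
  <= 2 * M0 * (Rabs (th k - th0 k) / w k) + E * (b - a).
Proof.
  intros Hab Hw Hf Hp HM0 HE; unfold gradL_explicit.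
  pose proof (abs_le_on_nonneg _ a b M0 Hab HM0) as HM00.
  pose proof (clamp_affine_sub_abs_le a b (w k) 0 (th k) (th0 k) Hw).
  pose proof (clamp_affine_sub_abs_le a b (w k) 1 (th k) (th0 k) Hw).
  rewrite !Rminus_0_l in *.
  eapply Rle_trans; [apply RInt_sub_abs_le; try apply clamp_bounds;
                      try apply continuity_grad_density; eassumption|].
  apply Rplus_le_compat_r; nra.
Qed.

Lemma continuity_pt_squeeze (G B : R -> R) s0 : continuity_pt B s0 -> B s0 = 0 ->
  (forall s, Rabs (G s - G s0) <= B s) -> continuity_pt G s0.
Proof.
  intros HB HB0 HGB eps Heps; destruct (HB eps Heps) as [delta [Hdelta Hclose]].
  exists delta; split; [exact Hdelta|]; intros s Hs; specialize (Hclose s Hs).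
  simpl in *; unfold R_dist in *; rewrite HB0, Rminus_0_r in Hclose.
  eapply Rle_lt_trans; [apply HGB|]; eapply Rle_lt_trans; [apply Rle_abs | exact Hclose].
Qed.

Lemma continuity_pt_gradL_explicit_path a b h v w f p k (Th : R -> nat -> R) s0 :
  a <= b -> 0 < w k -> (1 <= k <= h)%nat -> continuity f -> continuity p ->
  (forall i, (1 <= i <= S h)%nat -> continuity_pt (fun s => Th s i) s0) ->
  continuity_pt (fun s => gradL_explicit a b h v w f p (Th s) k) s0.
Proof.
  intros Hab Hw Hk Hf Hp HTh.
  destruct (continuity_bounded _ a b Hab (continuity_grad_density h v w f p (Th s0) k Hf Hp))
    as [M0 HM0].
  destruct (continuity_bounded p a b Hab Hp) as [Mp HMp].
  apply (continuity_pt_squeeze _ (fun s => 2 * M0 * (Rabs (Th s k - Th s0 k) / w k)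
          + 2 * Rabs (v k) * Mp * param_dist h v (Th s) (Th s0) * (b - a))).
  - pose proof (continuity_pt_param_dist h v Th (Th s0) s0 HTh); pose proof (HTh k ltac:(lia)).
    unfold Rdiv; continuity_pt_tac.
  - cbv beta; rewrite Rminus_diag, Rabs_R0, param_dist_refl; field; lra.
  - intros s; apply gradL_explicit_sub_abs_le; try assumption.
    intros x Hx; apply grad_density_sub_abs_le, HMp, Hx.
Qed.

Lemma gradL_explicit_abs_le_interior_dist a b h v w f p th k B Mf Mp :
  a <= b -> 0 < w k -> continuity f -> continuity p -> Rabs (th (S h)) <= B ->
  (forall x, a <= x <= b -> Rabs (f x) <= Mf) -> (forall x, a <= x <= b -> Rabs (p x) <= Mp) ->
  Rabs (gradL_explicit a b h v w f p th k)
  <= 2 * Rabs (v k) * (B + vnorm h v + Mf) * Mp / w k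
     * interior_dist (- w k * b) (1 - w k * a) (th k).
Proof.
  intros Hab Hw Hf Hp HB HMf HMp; apply gradL_explicit_abs_le; try assumption.
  intros x Hx; eapply Rle_trans; [apply grad_density_abs_le; [apply HMf, Hx | apply HMp, Hx]|].
  pose proof (Rabs_pos (v k)); pose proof (Rabs_pos (p x)); pose proof (HMp x Hx).
  apply Rmult_le_compat_r; [lra|]; apply Rmult_le_compat_l; lra.
Qed.

(* [P^2 e^(2 C s)] is nondecreasing, so [P] cannot reach [0]. *)
Lemma pos_of_derivative_le_mul_abs (P dP : R -> R) C t :
  (forall s, derivable_pt_lim P s (dP s)) ->
  (forall s, 0 <= s <= t -> Rabs (dP s) <= C * Rabs (P s)) ->
  0 < P 0 -> 0 <= t -> 0 < P t.
Proof.
  intros HP HdP HP0 Ht.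
  set (E := fun s => P s * P s * exp (2 * C * s)).
  set (dE := fun s => (2 * (P s * dP s) + 2 * C * (P s * P s)) * exp (2 * C * s)).
  assert (HE : forall s, derivable_pt_lim E s (dE s)).
  { intros s; unfold E, dE.
    replace ((2 * (P s * dP s) + 2 * C * (P s * P s)) * exp (2 * C * s))
      with ((dP s * P s + P s * dP s) * exp (2 * C * s)
            + P s * P s * (exp (2 * C * s) * (2 * C * 1))) by ring.
    apply (derivable_pt_lim_mult (fun s => P s * P s) (fun s => exp (2 * C * s)));
      [apply derivable_pt_lim_mult; apply HP|].
    apply (derivable_pt_lim_comp (fun s => 2 * C * s) exp);
      [apply (derivable_pt_lim_scal id), derivable_pt_lim_id | apply derivable_pt_lim_exp]. }
  assert (HdE : forall s, 0 <= s <= t -> 0 <= dE s).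
  { intros s Hs; unfold dE; apply Rmult_le_pos; [|apply Rlt_le, exp_pos].
    pose proof (HdP s Hs); pose proof (Rabs_pos (P s)).
    assert (Hsq : Rabs (P s) * Rabs (P s) = P s * P s)
      by (rewrite <- Rabs_mult; apply Rabs_pos_eq; nra).
    assert (Rabs (P s * dP s) <= C * (P s * P s)) by (rewrite Rabs_mult, <- Hsq; nra).
    pose proof (Rle_abs (- (P s * dP s))) as Hneg; rewrite Rabs_Ropp in Hneg; lra. }
  assert (HE0 : 0 < E 0) by (unfold E; rewrite Rmult_0_r, exp_0; nra).
  assert (HEmono : forall s, 0 <= s <= t -> E 0 <= E s).
  { intros s Hs; destruct (Req_dec s 0) as [->|Hs0]; [lra|].
    destruct (MVT_gen E 0 s dE) as [c [Hc Hmvt]].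
    - intros x _; apply is_derive_Reals, HE.
    - intros x _; apply (derivable_continuous_pt E x (exist _ (dE x) (HE x))).
    - rewrite Rmin_left, Rmax_right in Hc by lra; pose proof (HdE c ltac:(lra)); nra. }
  assert (HPne : forall s, 0 <= s <= t -> P s <> 0).
  { intros s Hs HPs; pose proof (HEmono s Hs); unfold E in *; rewrite HPs in *; lra. }
  destruct (Rlt_or_le 0 (P t)) as [Hpos|Hle]; [exact Hpos|]; exfalso.
  destruct (IVT_gen_consistent P 0 t 0) as [z [Hz HPz]].
  - intros x; apply continuity_pt_filterlim, (derivable_continuous_pt P x (exist _ (dP x) (HP x))).
  - unfold Rmin, Rmax; repeat destruct Rle_dec; lra.
  - rewrite Rmin_left, Rmax_right in Hz by lra; exact (HPne z Hz HPz).
Qed.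

Lemma interior_dist_mul_le lo hi u : lo < hi ->
  interior_dist lo hi u * Rabs (hi + lo - 2 * u) <= 2 * Rabs ((u - lo) * (hi - u)).
Proof.
  intros Hlh; unfold interior_dist, Rmax, Rmin.
  pose proof (Rabs_pos (hi + lo - 2 * u)); pose proof (Rabs_pos ((u - lo) * (hi - u))).
  repeat destruct Rle_dec; try lra;
    rewrite Rabs_mult, (Rabs_pos_eq (u - lo)), (Rabs_pos_eq (hi - u)) by lra;
    unfold Rabs; destruct Rcase_abs; nra.
Qed.

Lemma interval_invariant_of_derivative (U dU : R -> R) lo hi K t :
  (forall s, derivable_pt_lim U s (dU s)) ->
  (forall s, 0 <= s <= t -> Rabs (dU s) <= K * interior_dist lo hi (U s)) ->
  lo < U 0 < hi -> 0 <= t -> lo < U t < hi.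
Proof.
  intros HU HdU HU0 Ht.
  assert (HK : 0 <= K).
  { pose proof (HdU 0 (conj (Rle_refl 0) Ht)); pose proof (Rabs_pos (dU 0)).
    assert (0 < interior_dist lo hi (U 0))
      by (unfold interior_dist, Rmax, Rmin; repeat destruct Rle_dec; lra).
    nra. }
  assert (HP : 0 < (U t - lo) * (hi - U t)).
  { apply (pos_of_derivative_le_mul_abs (fun s => (U s - lo) * (hi - U s))
      (fun s => dU s * (hi + lo - 2 * U s)) (2 * K)); [| | cbv beta; nra | exact Ht].
    - intros s; replace (dU s * (hi + lo - 2 * U s))
        with ((dU s - 0) * (hi - U s) + (U s - lo) * (0 - dU s)) by ring.
      apply (derivable_pt_lim_mult (fun s => U s - lo) (fun s => hi - U s)).
      + apply (derivable_pt_lim_minus U (fun _ => lo)); [apply HU | apply derivable_pt_lim_const].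
      + apply (derivable_pt_lim_minus (fun _ => hi) U); [apply derivable_pt_lim_const | apply HU].
    - intros s Hs; rewrite Rabs_mult.
      pose proof (HdU s Hs); pose proof (interior_dist_mul_le lo hi (U s) ltac:(lra)).
      pose proof (Rabs_pos (hi + lo - 2 * U s)).
      eapply Rle_trans; [apply Rmult_le_compat_r; [assumption | eassumption]|]; nra. }
  destruct (Rlt_or_le lo (U t)); destruct (Rlt_or_le (U t) hi); split; nra.
Qed.

Lemma RInt_flow_interval_invariant (G : R -> R) U0 lo hi K t : continuity G ->
  (forall s, 0 <= s <= t -> Rabs (G s) <= K * interior_dist lo hi (U0 - RInt G 0 s)) ->
  lo < U0 < hi -> 0 <= t -> lo < U0 - RInt G 0 t < hi.
Proof.
  intros HG HGK HU0 Ht.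
  apply (interval_invariant_of_derivative (fun s => U0 - RInt G 0 s) (fun s => 0 - G s) lo hi K);
    [| intros s Hs; rewrite Rabs_minus_sym, Rminus_0_r; apply HGK, Hs | | exact Ht].
  - intros s; apply (derivable_pt_lim_minus (fun _ => U0)); [apply derivable_pt_lim_const|].
    apply is_derive_Reals, (is_derive_RInt G (fun b => RInt G 0 b) 0 s).
    + exists (mkposreal 1 Rlt_0_1); intros y _.
      apply (@RInt_correct R_CompleteNormedModule), ex_RInt_continuity, HG.
    + apply continuity_pt_filterlim, HG.
  - rewrite RInt_point; unfold zero; simpl; rewrite Rminus_0_r; exact HU0.
Qed.

Lemma Iset_nonempty_iff a b w th k : a < b -> 0 < w k ->
  (exists x, Iset a b w th k x) <-> - w k * b < th k < 1 - w k * a.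
Proof.
  intros Hab Hw; unfold Iset, psi; set (q := - / w k * th k).
  assert (Hth : th k = - w k * q) by (unfold q; field; lra).
  assert (Hinv : w k * / w k = 1) by (field; lra).
  assert (Hinv0 : 0 < / w k) by (apply Rinv_0_lt_compat, Hw).
  rewrite Hth; split.
  - intros [x [[Hx1 Hx2] [Hx3 Hx4]]].
    assert (w k * (a - q) < w k * / w k) by (apply Rmult_lt_compat_l; lra).
    split; nra.
  - intros [H1 H2].
    assert (Hq : q < b) by nra.
    assert (Hq' : a < q + / w k).
    { apply (Rmult_lt_reg_l (w k)); [exact Hw|]; nra. }
    exists ((Rmax q a + Rmin (q + / w k) b) / 2).
    pose proof (Rmax_l q a); pose proof (Rmax_r q a).
    pose proof (Rmin_l (q + / w k) b); pose proof (Rmin_r (q + / w k) b).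
    assert (Rmax q a < Rmin (q + / w k) b) by (unfold Rmax, Rmin; repeat destruct Rle_dec; lra).
    repeat split; lra.
Qed.

Lemma continuity_pt_extend_nonneg (F : R -> R) s :
  (forall t, 0 <= t -> filterlim F (within (fun u => 0 <= u) (locally t)) (locally (F t))) ->
  continuity_pt (fun u => F (Rmax u 0)) s.
Proof.
  intros HF; apply continuity_pt_filterlim.
  apply (filterlim_comp R R R (fun u => Rmax u 0) F _
           (within (fun u => 0 <= u) (locally (Rmax s 0)))); [|apply HF, Rmax_r].
  intros P [eps Heps]; exists eps; intros y Hy; apply Heps; [|apply Rmax_r].
  change (Rabs (Rmax y 0 - Rmax s 0) < eps); change (Rabs (y - s) < eps) in Hy.
  eapply Rle_lt_trans; [|exact Hy].
  unfold Rmax; repeat destruct Rle_dec; unfold Rabs; repeat destruct Rcase_abs; lra.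
Qed.

Lemma gradient_flow_coordinate_eq a b h v w f p (Theta : R -> nat -> R) k :
  a <= b -> 0 < w k -> (1 <= k <= h)%nat -> continuity f -> continuity p ->
  (forall t, 0 <= t -> forall i, (1 <= i <= S h)%nat ->
     Theta t i = Theta 0 i - RInt (fun s => gradL a b h v w f p (Theta s) i) 0 t) ->
  forall t, 0 <= t ->
  Theta t k = Theta 0 k - RInt (fun s => gradL_explicit a b h v w f p (Theta (Rmax s 0)) k) 0 t.
Proof.
  intros Hab Hw Hk Hf Hp Hflow t Ht; rewrite (Hflow t Ht k) by lia; f_equal; apply RInt_ext.
  intros s Hs; rewrite Rmin_left, Rmax_right in Hs by lra.
  rewrite Rmax_left by lra; apply gradL_eq_explicit; assumption.
Qed.

Theorem lemma2p22 (a b : R) (h : nat) (v w : nat -> R) (f p : R -> R)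
  (Theta : R -> nat -> R) (k : nat) :
  a < b ->
  (forall i, (1 <= i <= h)%nat -> 0 < v i /\ 0 < w i) ->
  (forall x, continuous f x) ->
  (forall x, continuous p x) ->
  (forall x, 0 <= p x) ->
  (forall x, 0 < p x <-> a < x < b) ->
  (forall i, (1 <= i <= S h)%nat -> forall t, 0 <= t ->
     filterlim (fun s => Theta s i) (within (fun s => 0 <= s) (locally t))
       (locally (Theta t i))) ->
  (forall t, 0 <= t -> forall i, (1 <= i <= S h)%nat ->
     Theta t i = Theta 0 i - RInt (fun s => gradL a b h v w f p (Theta s) i) 0 t) ->
  (1 <= k <= h)%nat ->
  (exists x, Iset a b w (Theta 0) k x) ->
  forall t, 0 <= t -> exists x, Iset a b w (Theta t) k x.
Proof.
  intros Hab Hvw Hfc Hpc _ _ Hcont Hflow Hk Hinit t Ht.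
  destruct (Hvw k Hk) as [_ Hw].
  assert (Hf : continuity f) by (intros x; apply continuity_pt_filterlim, Hfc).
  assert (Hp : continuity p) by (intros x; apply continuity_pt_filterlim, Hpc).
  (* Extending the flow constantly to negative times lets the calculus on [R] apply. *)
  set (Th := fun s => Theta (Rmax s 0)).
  assert (HTh : forall i, (1 <= i <= S h)%nat -> continuity (fun s => Th s i))
    by (intros i Hi s; apply (continuity_pt_extend_nonneg (fun s => Theta s i)), Hcont, Hi).
  set (G := fun s => gradL_explicit a b h v w f p (Th s) k).
  assert (HG : continuity G).
  { intros s; apply (continuity_pt_gradL_explicit_path a b h v w f p k Th s); try lra;
      try assumption.
    intros i Hi; apply HTh, Hi. }
  pose proof (gradient_flow_coordinate_eq a b h v w f p Theta k ltac:(lra) Hw Hk Hf Hp Hflow)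
    as HThk.
  fold Th G in HThk.
  destruct (continuity_bounded (fun s => Th s (S h)) 0 t Ht (HTh (S h) ltac:(lia))) as [B HB].
  destruct (continuity_bounded f a b ltac:(lra) Hf) as [Mf HMf].
  destruct (continuity_bounded p a b ltac:(lra) Hp) as [Mp HMp].
  apply Iset_nonempty_iff in Hinit; [|exact Hab|exact Hw].
  apply Iset_nonempty_iff; [exact Hab|exact Hw|]; rewrite HThk by exact Ht.
  apply (RInt_flow_interval_invariant G _ _ _ (2 * Rabs (v k) * (B + vnorm h v + Mf) * Mp / w k));
    [exact HG | | exact Hinit | exact Ht].
  intros s Hs; rewrite <- HThk by lra.
  replace (Theta s k) with (Th s k) by (unfold Th; rewrite Rmax_left by lra; reflexivity).
  apply (gradL_explicit_abs_le_interior_dist a b h v w f p (Th s) k B Mf Mp); try lra;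
    try assumption.
  apply HB, Hs.
Qed.
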